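(* Consider a finite MDP with states $\mathcal{X}=\{1,\dots,n\}$, finite action set $\mathcal{A}$, costs $c(i,a)$, discount factor $\vartheta\in(0,1)$, a policy $\pi:\mathcal{X}\to\mathcal{A}$, uncertainty sets $\mathcal{P}^a_i$, proxy uncertainty sets $\widehat{\mathcal{P}^a_i}$, exploration matrix $P^{\widehat{\pi}}$ with stationary distribution $\xi$ and feature matrix $\Phi\in\mathbb{R}^{n\times d}$ as in the context. Suppose there is $\alpha\in(0,1)$ with $\vartheta p_j\le\alpha P^{\widehat{\pi}}_{ij}$ for all $i,j\in\mathcal{X}$, $a\in\mathcal{A}$, $p\in\mathcal{P}^a_i$; let $\beta^a_i:=\max_{y\in\widehat{U^a_i}}\min_{x\in U^a_i}\|y-x\|_\xi/\xi_{\min}$, $\beta:=\max_{i}\beta^{\pi(i)}_i$, and assume $\alpha^2+\vartheta^2\beta^2<\tfrac12$. Let $\widetilde{v}_\pi\in\mathbb{R}^n$ satisfy $\Pi\widehat{T}_\pi\widetilde{v}_\pi=\widetilde{v}_\pi$ and let $v_\pi\in\mathbb{R}^n$ satisfy $T_\pi v_\pi=v_\pi$. Then \[ \|\widetilde{v}_\pi-v_\pi\|_\xi\le\frac{\vartheta\beta\|v_\pi\|_\xi+\|\Pi v_\pi-v_\pi\|_\xi}{1-\sqrt{2(\alpha^2+\vartheta^2\beta^2)}} . \] In particular, if $\beta^{\pi(i)}_i=0$ for all $i$ (the proxy confidence regions equal the true ones), then $\|\widetilde{v}_\pi-v_\pi\|_\xi\le\dfrac{\|\Pi v_\pi-v_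\pi\|_\xi}{1-\alpha}$.
   Context: For each $i\in\mathcal{X},a\in\mathcal{A}$: $p^a_i\in\Delta_n$ is the nominal transition probability vector; $U^a_i\subseteq\mathbb{R}^n$ is a nonempty compact confidence region with $\mathcal{P}^a_i:=\{p^a_i+x\mid x\in U^a_i\}\subseteq\Delta_n$; $\widehat{U^a_i}\supseteq U^a_i$ is a nonempty compact proxy region and $\widehat{\mathcal{P}^a_i}:=\{p^a_i+y\mid y\in\widehat{U^a_i}\}$. $\sigma_S(v):=\sup_{s\in S}s^\top v$. Robust Bellman operator: $(T_\pi v)(i):=c(i,\pi(i))+\vartheta\,\sigma_{\mathcal{P}^{\pi(i)}_i}(v)$; proxy robust Bellman operator: $(\widehat{T}_\pi v)(i):=c(i,\pi(i))+\vartheta\,\sigma_{\widehat{\mathcal{P}^{\pi(i)}_i}}(v)$. $P^{\widehat{\pi}}$ is the $n\times n$ transition matrix of the exploration policy, $\xi$ its steady-state distribution with all entries positive, $\xi_{\min}=\min_i\xi_i$, $\|x\|_\xi:=(\sum_i\xi_ix_i^2)^{1/2}$, and $\Pi$ is the $\|\cdot\|_\xi$-orthogonal projection onto $S:=\{\Phi\theta\mid\theta\in\mathbb{R}^d\}$. *)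

From HB Require Import structures.
From mathcomp Require Import all_boot all_order all_algebra.
From mathcomp Require Import all_classical all_reals all_analysis.
Set Implicit Arguments. Unset Strict Implicit. Unset Printing Implicit Defensive.
Import Order.TTheory GRing.Theory Num.Theory.
Import numFieldNormedType.Exports.
Local Open Scope classical_set_scope.
Local Open Scope ring_scope.

Section Defs.
Variables (R : realType) (n : nat).

(* vectors of R^n are column vectors 'cV[R]_n ; entry i is x i 0 *)

Definition dotv (s v : 'cV[R]_n) : R := \sum_(i < n) s i 0 * v i 0.

Definition supp_fun (S : set 'cV[R]_n) (v : 'cV[R]_n) : R :=
  sup [set dotv s v | s in S].

Definition simplex : set 'cV[R]_n :=
  [set q | (forall j, 0 <= q j 0) /\ \sum_(j < n) q j 0 = 1].

Definition xinner (xi x y : 'cV[R]_n) : R := \sum_(i < n) xi i 0 * x i 0 * y i 0.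
Definition xnorm (xi x : 'cV[R]_n) : R := Num.sqrt (\sum_(i < n) xi i 0 * x i 0 ^+ 2).

(* xi_min = min_i xi_i.  Since xi is a probability vector, every entry is
   <= 1, so using 1 as the neutral element of the min gives exactly min_i xi_i. *)
Definition xi_min (xi : 'cV[R]_n) : R := \big[Num.min/1]_(i < n) xi i 0.

Definition is_xi_proj (d : nat) (Phi : 'M[R]_(n, d)) (xi x y : 'cV[R]_n) : Prop :=
  (exists th : 'cV[R]_d, y = Phi *m th) /\
  (forall th : 'cV[R]_d, xinner xi (x - y) (Phi *m th) = 0).

Definition stochastic (P : 'M[R]_n) : Prop :=
  (forall i j, 0 <= P i j) /\ (forall i, \sum_(j < n) P i j = 1).

Definition stationary (P : 'M[R]_n) (xi : 'cV[R]_n) : Prop :=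
  simplex xi /\ (forall j, \sum_(i < n) xi i 0 * P i j = xi j 0).

Variable (A : finType).

Definition shift_set (p : 'cV[R]_n) (U : set 'cV[R]_n) : set 'cV[R]_n :=
  [set p + x | x in U].

Definition bellman (c : 'I_n -> A -> R) (theta : R) (pi : 'I_n -> A)
  (p : 'I_n -> A -> 'cV[R]_n) (U : 'I_n -> A -> set 'cV[R]_n) (v : 'cV[R]_n)
  : 'cV[R]_n :=
  \col_i (c i (pi i) + theta * supp_fun (shift_set (p i (pi i)) (U i (pi i))) v).

(* beta_i^a = max_{y in Uhat} min_{x in U} ||y - x||_xi / xi_min
   (max/min attained by compactness, written as sup/inf) *)
Definition beta_ia (xi : 'cV[R]_n) (U Uhat : set 'cV[R]_n) : R :=
  sup [set inf [set xnorm xi (y - x) | x in U] | y in Uhat] / xi_min xi.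

(* beta = max_i beta_i^{pi(i)}  (each beta_i^a >= 0) *)
Definition beta_max (xi : 'cV[R]_n) (pi : 'I_n -> A)
  (U Uhat : 'I_n -> A -> set 'cV[R]_n) : R :=
  \big[Num.max/0]_(i < n) beta_ia xi (U i (pi i)) (Uhat i (pi i)).

End Defs.
Arguments simplex {R n}.

From HB Require Import structures.
From mathcomp Require Import all_boot all_order all_algebra.
From mathcomp Require Import all_classical all_reals all_analysis.
From mathcomp Require Import ring lra.
Import Order.TTheory GRing.Theory Num.Theory.
Import numFieldNormedType.Exports.
Local Open Scope classical_set_scope.
Local Open Scope ring_scope.
(* Put w := vt - v.  The two fixed-point equations split w into
   (Pi (That vt) - Pi (That v)) + (Pi (That v) - Pi (T v)) + (Pi v - v), and the
   xi-orthogonal projection Pi is nonexpansive in the xi-norm.  A point p + y of a proxy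
   set lies within beta * xi_min of some p + x of the true set, and the weighted
   Cauchy-Schwarz inequality s.u <= |s|_xi |u|_xi / xi_min turns this into
   s.u <= (p + x).u + beta |u|_xi, while (p + x).u <= (alpha / theta) (P |u|)_i by the
   domination hypothesis.  Hence, entrywise,
     |(That x - That y)_i| <= alpha (P |x - y|)_i + theta beta |x - y|_xi,
     |(That v - T v)_i| <= theta beta |v|_xi.
   Jensen along the rows of P and stationarity of xi give |P |w||_xi <= |w|_xi, so with
   (a + b)^2 <= 2 a^2 + 2 b^2 the first term is at most sqrt (2 (alpha^2 + theta^2 beta^2))
   times |w|_xi (at most alpha |w|_xi when beta = 0), and the bound follows by solving
   |w|_xi <= k |w|_xi + theta beta |v|_xi + |Pi v - v|_xi for |w|_xi. *)

Set Implicit Arguments. Unset Strict Implicit.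

Lemma weighted_cauchy_schwarz (R : realDomainType) (n : nat) (c a b : 'I_n -> R) :
  (forall i, 0 <= c i) ->
  (\sum_i c i * a i * b i) ^+ 2 <= (\sum_i c i * a i ^+ 2) * (\sum_i c i * b i ^+ 2).
Proof.
move=> c_ge0; set A := \sum_i _ * a i ^+ 2; set B := \sum_i _ * b i ^+ 2.
set C := \sum_i _.
have lagrange : 2 * (A * B - C ^+ 2)
    = \sum_i \sum_j c i * c j * (a i * b j - a j * b i) ^+ 2.
  transitivity (A * B + B * A - 2 * (C * C)); first by ring.
  rewrite /A /B /C !big_distrlr -big_split mulr_sumr -sumrB /=.
  apply: eq_bigr => i _; rewrite -big_split mulr_sumr -sumrB /=.
  by apply: eq_bigr => j _; ring.
have : 0 <= 2 * (A * B - C ^+ 2).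
  rewrite lagrange; apply: sumr_ge0 => i _; apply: sumr_ge0 => j _.
  by rewrite mulr_ge0 ?sqr_ge0 // mulr_ge0.
by rewrite pmulr_rge0 // subr_ge0.
Qed.

Lemma ler_of_sqr (R : realDomainType) (s t : R) : 0 <= t -> s ^+ 2 <= t ^+ 2 -> s <= t.
Proof.
move=> t_ge0 st; apply: le_trans (ler_norm s) _.
by rewrite -ler_sqr ?nnegrE // real_normK ?num_real.
Qed.

Lemma ler_div_of_contraction (R : realFieldType) (w k e : R) :
  k < 1 -> w <= k * w + e -> w <= e / (1 - k).
Proof. by move=> k_lt1 wke; rewrite ler_pdivlMr ?subr_gt0 //; lra. Qed.

Lemma sqrtr_double_lt1 (R : rcfType) (x : R) : x < 1 / 2 -> Num.sqrt (2 * x) < 1.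
Proof. by move=> x_lt; rewrite -[X in _ < X]sqrtr1 ltr_sqrt //; lra. Qed.

Lemma ler_add_scale_inf (R : realType) (E : set R) (a b k : R) :
  E !=set0 -> 0 <= k -> (forall e, E e -> a <= b + k * e) -> a <= b + k * inf E.
Proof.
move=> [e0 Ee0] k_ge0 aE; have [k0|k_neq0] := eqVneq k 0.
  by have := aE e0 Ee0; rewrite k0 !mul0r.
have k_gt0 : 0 < k by rewrite lt_def k_neq0.
rewrite -lerBlDl -ler_pdivrMl //; apply: lb_le_inf; first by exists e0.
by move=> e Ee; rewrite ler_pdivrMl // lerBlDl; exact: aE.
Qed.

Section WeightedNorm.
Variables (R : realType) (n : nat) (xi : 'cV[R]_n).
Hypothesis xi_ge0 : forall i, 0 <= xi i 0.

Definition xnorm2 (x : 'cV[R]_n) : R := \sum_i xi i 0 * x i 0 ^+ 2.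

Lemma xnorm2_ge0 x : 0 <= xnorm2 x.
Proof. by apply: sumr_ge0 => i _; rewrite mulr_ge0 ?sqr_ge0. Qed.

Lemma xnorm_ge0 x : 0 <= xnorm xi x.
Proof. exact: sqrtr_ge0. Qed.

Lemma sqr_xnorm x : xnorm xi x ^+ 2 = xnorm2 x.
Proof. by rewrite sqr_sqrtr ?xnorm2_ge0. Qed.

Lemma xnorm_le x b : 0 <= b -> xnorm2 x <= b ^+ 2 -> xnorm xi x <= b.
Proof. by move=> b_ge0 xb; apply: ler_of_sqr; rewrite ?sqr_xnorm. Qed.

Lemma xnorm2D x y : xnorm2 (x + y) = xnorm2 x + 2 * xinner xi x y + xnorm2 y.
Proof.
rewrite /xnorm2 /xinner mulr_sumr -!big_split /=.
by apply: eq_bigr => i _; rewrite mxE; ring.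
Qed.

Lemma xnorm_distC x y : xnorm xi (x - y) = xnorm xi (y - x).
Proof.
by rewrite /xnorm -opprB; congr Num.sqrt; apply: eq_bigr => i _; rewrite mxE sqrrN.
Qed.

Lemma xinnerBl x y z : xinner xi (x - y) z = xinner xi x z - xinner xi y z.
Proof. by rewrite /xinner -sumrB; apply: eq_bigr => i _; rewrite !mxE; ring. Qed.

Lemma xinner_le x y : xinner xi x y <= xnorm xi x * xnorm xi y.
Proof.
apply: ler_of_sqr; first by rewrite mulr_ge0 ?xnorm_ge0.
by rewrite exprMn !sqr_xnorm; exact: weighted_cauchy_schwarz.
Qed.

Lemma ler_xnormD x y : xnorm xi (x + y) <= xnorm xi x + xnorm xi y.
Proof.
apply: xnorm_le; first by rewrite addr_ge0 ?xnorm_ge0.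
rewrite xnorm2D -!sqr_xnorm; have := xinner_le x y; nra.
Qed.

Lemma xnorm2_le_majorant (x : 'cV[R]_n) (m : 'I_n -> R) :
  (forall i, `|x i 0| <= m i) -> xnorm2 x <= \sum_i xi i 0 * m i ^+ 2.
Proof.
move=> xm; apply: ler_sum => i _; rewrite ler_wpM2l // -real_normK ?num_real //.
by rewrite lerXn2r ?nnegrE // (le_trans _ (xm i)).
Qed.

Lemma xi_proj_nonexpansive d (Phi : 'M[R]_(n, d)) (Pi : 'cV[R]_n -> 'cV[R]_n) x y :
  (forall z, is_xi_proj Phi xi z (Pi z)) -> xnorm xi (Pi x - Pi y) <= xnorm xi (x - y).
Proof.
move=> proj; have [[thx Pix] orth_x] := proj x; have [[thy Piy] orth_y] := proj y.
set u := Pi x - Pi y; have u_range : u = Phi *m (thx - thy) by rewrite /u Pix Piy mulmxBr.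
have orth : xinner xi (x - y - u) u = 0.
  have -> : x - y - u = (x - Pi x) - (y - Pi y).
    by rewrite /u; apply/matrixP => i j; rewrite !mxE; ring.
  by rewrite xinnerBl u_range orth_x orth_y subr0.
apply: xnorm_le; first exact: xnorm_ge0.
rewrite sqr_xnorm -(subrK u (x - y)) [X in _ <= X]xnorm2D orth mulr0 addr0.
by rewrite lerDr xnorm2_ge0.
Qed.

Lemma sqr_stochastic_row_le (P : 'M[R]_n) (w : 'cV[R]_n) i :
  stochastic P -> (\sum_j P i j * `|w j 0|) ^+ 2 <= \sum_j P i j * w j 0 ^+ 2.
Proof.
move=> [P_ge0 P_sum1].
have := weighted_cauchy_schwarz (fun j => `|w j 0|) (fun=> 1) (P_ge0 i).
under eq_bigr do rewrite mulr1; under [X in _ * X]eq_bigr do rewrite expr1n mulr1.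
rewrite P_sum1 mulr1 => /le_trans; apply; apply: ler_sum => j _.
by rewrite real_normK ?num_real.
Qed.

Lemma stationary_jensen (P : 'M[R]_n) (w : 'cV[R]_n) :
  stochastic P -> stationary P xi ->
  \sum_i xi i 0 * (\sum_j P i j * `|w j 0|) ^+ 2 <= xnorm2 w.
Proof.
move=> P_st [_ xiP].
apply: le_trans (_ : \sum_i xi i 0 * \sum_j P i j * w j 0 ^+ 2 <= _).
  by apply: ler_sum => i _; rewrite ler_wpM2l ?sqr_stochastic_row_le.
under eq_bigr do rewrite mulr_sumr; rewrite exchange_big /=.
apply: ler_sum => j _; rewrite -xiP mulr_suml.
by apply: ler_sum => i _; rewrite mulrA.
Qed.

Hypothesis xi_sum1 : \sum_i xi i 0 = 1.

Lemma xnorm_le_entrywise (x : 'cV[R]_n) (b : R) :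
  0 <= b -> (forall i, `|x i 0| <= b) -> xnorm xi x <= b.
Proof.
move=> b_ge0 xb; apply: xnorm_le => //.
by apply: le_trans (xnorm2_le_majorant xb) _; rewrite -mulr_suml xi_sum1 mul1r.
Qed.

Lemma xnorm2_le_shifted_majorant (x : 'cV[R]_n) (m : 'I_n -> R) t :
  (forall i, `|x i 0| <= m i + t) -> xnorm2 x <= 2 * (\sum_i xi i 0 * m i ^+ 2 + t ^+ 2).
Proof.
move=> xmt; apply: le_trans (xnorm2_le_majorant xmt) _.
have -> : t ^+ 2 = \sum_i xi i 0 * t ^+ 2 by rewrite -mulr_suml xi_sum1 mul1r.
rewrite -big_split mulr_sumr /=; apply: ler_sum => i _.
have := mulr_ge0 (xi_ge0 i) (sqr_ge0 (m i - t)); nra.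
Qed.

End WeightedNorm.

Lemma xi_min_le (R : realType) (n : nat) (xi : 'cV[R]_n) i : xi_min xi <= xi i 0.
Proof. exact: bigmin_le. Qed.

Lemma xi_min_gt0 (R : realType) (n : nat) (xi : 'cV[R]_n) :
  (forall i, 0 < xi i 0) -> 0 < xi_min xi.
Proof.
by move=> xi_gt0; rewrite /xi_min; elim/big_ind: _ => // x y x0 y0; rewrite lt_min x0 y0.
Qed.

Lemma dotv_le_xnorm (R : realType) (n : nat) (xi z u : 'cV[R]_n) :
  (forall i, 0 < xi i 0) -> dotv z u <= xnorm xi z * xnorm xi u / xi_min xi.
Proof.
move=> xi_gt0; have xi_ge0 i : 0 <= xi i 0 by exact: ltW.
have m_gt0 := xi_min_gt0 xi_gt0.
apply: ler_of_sqr; first by rewrite divr_ge0 ?mulr_ge0 ?xnorm_ge0 // ltW.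
have -> : dotv z u = \sum_j xi j 0 * z j 0 * (u j 0 / xi j 0).
  by apply: eq_bigr => j _; field; rewrite gt_eqF.
apply: le_trans (weighted_cauchy_schwarz _ _ xi_ge0) _.
rewrite expr_div_n exprMn !sqr_xnorm // -mulrA ler_wpM2l ?xnorm2_ge0 //.
rewrite /xnorm2 mulr_suml; apply: ler_sum => j _.
rewrite expr_div_n -[X in _ <= X]mulrA ler_pM2l //; apply: ler_wpM2l; first exact: sqr_ge0.
by rewrite lef_pV2 ?posrE ?exprn_gt0 // ler_sqr ?nnegrE ?xi_min_le // ltW.
Qed.

Section SupportFunction.
Variables (R : realType) (n : nat).
Implicit Types (S K : set 'cV[R]_n) (p s u x y : 'cV[R]_n).

Lemma dotvDl x y u : dotv (x + y) u = dotv x u + dotv y u.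
Proof. by rewrite /dotv -big_split; apply: eq_bigr => i _; rewrite mxE mulrDl. Qed.

Lemma dotvDr s x y : dotv s (x + y) = dotv s x + dotv s y.
Proof. by rewrite /dotv -big_split; apply: eq_bigr => i _; rewrite mxE mulrDr. Qed.

Lemma supp_fun_ge S u s :
  has_ubound [set dotv s u | s in S] -> S s -> dotv s u <= supp_fun S u.
Proof.
move=> S_ub Ss; apply: sup_upper_bound; last by exists s.
by split=> //; exists (dotv s u), s.
Qed.

Lemma supp_fun_le S u (b : R) :
  S !=set0 -> (forall s, S s -> dotv s u <= b) -> supp_fun S u <= b.
Proof.
move=> [s0 Ss0] Sb; apply: ge_sup; first by exists (dotv s0 u), s0.
by move=> _ [s Ss <-]; exact: Sb.
Qed.

Lemma supp_fun_subset S S' u :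
  S !=set0 -> S `<=` S' -> has_ubound [set dotv s u | s in S'] ->
  supp_fun S u <= supp_fun S' u.
Proof.
by move=> S_neq0 SS' S'_ub; apply: supp_fun_le => // s Ss; apply: supp_fun_ge; auto.
Qed.

Lemma abs_supp_funB_le S x y (m : R) :
  S !=set0 -> (forall u, has_ubound [set dotv s u | s in S]) ->
  (forall s, S s -> dotv s (x - y) <= m) -> (forall s, S s -> dotv s (y - x) <= m) ->
  `|supp_fun S x - supp_fun S y| <= m.
Proof.
move=> S_neq0 S_ub mxy myx.
have shift x' y' : (forall s, S s -> dotv s (x' - y') <= m) ->
    supp_fun S x' <= supp_fun S y' + m.
  move=> mx'y'; apply: supp_fun_le => // s Ss.
  rewrite -(subrK y' x') addrC dotvDr; apply: lerD; first exact: supp_fun_ge.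
  exact: mx'y'.
have := shift _ _ mxy; have := shift _ _ myx.
by rewrite ler_norml => ? ?; apply/andP; split; lra.
Qed.

Lemma compact_entry_bounded K :
  compact K -> exists2 M, 0 <= M & forall y, K y -> forall j, `|y j 0| <= M.
Proof.
move=> /compact_bounded [M [M_real KM]]; exists (`|M| + 1) => [|y Ky j].
  by rewrite addr_ge0.
apply: le_trans (KM _ _ y Ky); last first.
  by apply: le_lt_trans (real_ler_norm M_real) _; rewrite ltrDl.
rewrite [X in _ <= X]mx_normrE.
exact: (le_bigmax _ (fun ij : 'I_n * 'I_1 => `|y ij.1 ij.2|) (j, 0)).
Qed.

Lemma dotv_shift_ubound p K (M : R) u :
  (forall y, K y -> forall j, `|y j 0| <= M) ->
  has_ubound [set dotv s u | s in shift_set p K].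
Proof.
move=> KM; exists (\sum_j (`|p j 0| + M) * `|u j 0|) => _ [_ [y Ky <-] <-].
apply: le_trans (ler_norm _) _; apply: le_trans (ler_norm_sum _ _ _) _.
apply: ler_sum => j _; rewrite normrM ler_wpM2r // mxE.
by apply: le_trans (ler_normD _ _) _; rewrite lerD2l KM.
Qed.

End SupportFunction.

Section ProxyDistance.
Variables (R : realType) (n : nat) (xi : 'cV[R]_n).
Hypothesis xi_gt0 : forall i, 0 < xi i 0.
Hypothesis xi_sum1 : \sum_i xi i 0 = 1.

Definition dist_to (U : set 'cV[R]_n) (y : 'cV[R]_n) : R :=
  inf [set xnorm xi (y - x) | x in U].

Lemma beta_iaE U Uhat : beta_ia xi U Uhat = sup (dist_to U @` Uhat) / xi_min xi.
Proof. by []. Qed.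

Lemma dist_to_le U x y : U x -> dist_to U y <= xnorm xi (y - x).
Proof.
move=> Ux; apply: ge_inf; last by exists x.
by exists 0 => _ [x' _ <-]; exact: xnorm_ge0.
Qed.

Variables (U Uhat : set 'cV[R]_n) (M : R).
Hypotheses (U_neq0 : U !=set0) (U_sub : U `<=` Uhat) (M_ge0 : 0 <= M).
Hypothesis Uhat_bounded : forall y, Uhat y -> forall j, `|y j 0| <= M.

Lemma dist_to_le_sup y : Uhat y -> dist_to U y <= sup (dist_to U @` Uhat).
Proof.
have xi_ge0 i : 0 <= xi i 0 by exact: ltW.
move=> Uhat_y; apply: sup_upper_bound; last by exists y.
split; first by exists (dist_to U y), y.
have [x0 Ux0] := U_neq0; exists (M + M) => _ [y' Uhat_y' <-].
apply: le_trans (dist_to_le y' Ux0) _; apply: xnorm_le_entrywise => // [|j].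
  by rewrite addr_ge0.
rewrite !mxE; apply: le_trans (ler_normB _ _) _.
by rewrite lerD ?Uhat_bounded //; apply: U_sub.
Qed.

Lemma dotv_proxy_le p u y (G : R) :
  Uhat y -> (forall x, U x -> dotv (p + x) u <= G) ->
  dotv (p + y) u <= G + beta_ia xi U Uhat * xnorm xi u.
Proof.
move=> Uhat_y UG; set k := xnorm xi u / xi_min xi.
have k_ge0 : 0 <= k by rewrite divr_ge0 ?xnorm_ge0 // ltW // xi_min_gt0.
have : dotv (p + y) u <= G + k * dist_to U y.
  apply: ler_add_scale_inf => [|//|_ [x Ux <-]].
    by have [x Ux] := U_neq0; exists (xnorm xi (y - x)), x.
  rewrite -(subrK (p + x) (p + y)) addrC dotvDl; apply: lerD; first exact: UG.
  rewrite (_ : p + y - (p + x) = y - x); last by rewrite opprD addrACA subrr add0r.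
  by rewrite /k mulrC mulrA; exact: dotv_le_xnorm.
move/le_trans; apply; rewrite lerD2l.
have -> : beta_ia xi U Uhat * xnorm xi u = k * sup (dist_to U @` Uhat).
  by rewrite beta_iaE /k; ring.
by rewrite ler_wpM2l // dist_to_le_sup.
Qed.

End ProxyDistance.

Lemma le_beta_max (R : realType) (n : nat) (A : finType) (xi : 'cV[R]_n) (pi : 'I_n -> A)
    (U Uhat : 'I_n -> A -> set 'cV[R]_n) i :
  beta_ia xi (U i (pi i)) (Uhat i (pi i)) <= beta_max xi pi U Uhat.
Proof. exact: (le_bigmax _ (fun i => beta_ia xi (U i (pi i)) (Uhat i (pi i)))). Qed.

Lemma beta_max_ge0 (R : realType) (n : nat) (A : finType) (xi : 'cV[R]_n) (pi : 'I_n -> A)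
    (U Uhat : 'I_n -> A -> set 'cV[R]_n) :
  0 <= beta_max xi pi U Uhat.
Proof. exact: bigmax_ge_id. Qed.

Lemma beta_max_eq0 (R : realType) (n : nat) (A : finType) (xi : 'cV[R]_n) (pi : 'I_n -> A)
    (U Uhat : 'I_n -> A -> set 'cV[R]_n) :
  (forall i, beta_ia xi (U i (pi i)) (Uhat i (pi i)) = 0) -> beta_max xi pi U Uhat = 0.
Proof.
by move=> beta0; apply: (big_ind (fun x => x = 0)) => // x y -> ->; rewrite maxxx.
Qed.

Unset Implicit Arguments.
Section RobustBellman.
Variables (R : realType) (n : nat) (A : finType).
Variables (c : 'I_n -> A -> R) (theta alpha : R) (pi : 'I_n -> A).
Variables (p : 'I_n -> A -> 'cV[R]_n) (U Uhat : 'I_n -> A -> set 'cV[R]_n).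
Variables (P : 'M[R]_n) (xi : 'cV[R]_n).
Hypotheses (theta_gt0 : 0 < theta) (alpha_ge0 : 0 <= alpha).
Hypothesis U_neq0 : forall i a, U i a !=set0.
Hypothesis shift_U_simplex : forall i a, shift_set (p i a) (U i a) `<=` simplex.
Hypothesis U_sub_Uhat : forall i a, U i a `<=` Uhat i a.
Hypothesis Uhat_compact : forall i a, compact (Uhat i a).
Hypotheses (P_stochastic : stochastic P) (xi_stationary : stationary P xi).
Hypothesis xi_gt0 : forall i, 0 < xi i 0.
Hypothesis U_dominated :
  forall i j a q, shift_set (p i a) (U i a) q -> theta * q j 0 <= alpha * P i j.

Local Notation beta := (beta_max xi pi U Uhat).
Local Notation That := (bellman c theta pi p Uhat).
Local Notation T := (bellman c theta pi p U).

Let xi_ge0 i : 0 <= xi i 0. Proof. exact: ltW. Qed.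
Let xi_sum1 : \sum_i xi i 0 = 1. Proof. by case: xi_stationary => -[]. Qed.

Let shift_U_neq0 i a : shift_set (p i a) (U i a) !=set0.
Proof. by have [x Ux] := U_neq0 i a; exists (p i a + x), x. Qed.

Let shift_U_sub i a : shift_set (p i a) (U i a) `<=` shift_set (p i a) (Uhat i a).
Proof. by move=> _ [x Ux <-]; exists x => //; exact: U_sub_Uhat. Qed.

Let shift_Uhat_neq0 i a : shift_set (p i a) (Uhat i a) !=set0.
Proof. by have [s Ss] := shift_U_neq0 i a; exists s; exact: shift_U_sub. Qed.

Let shift_Uhat_ubound i a u :
  has_ubound [set dotv s u | s in shift_set (p i a) (Uhat i a)].
Proof.
by have [M _ UM] := compact_entry_bounded (Uhat_compact i a); exact: dotv_shift_ubound UM.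
Qed.

Let shift_U_ubound i a u : has_ubound [set dotv s u | s in shift_set (p i a) (U i a)].
Proof.
have [M _ UM] := compact_entry_bounded (Uhat_compact i a).
by apply: dotv_shift_ubound => y Uy; apply: UM; exact: U_sub_Uhat.
Qed.

Lemma dotv_nominal_le i a x z :
  U i a x -> dotv (p i a + x) z <= alpha / theta * \sum_j P i j * `|z j 0|.
Proof.
move=> Ux; have Sq : shift_set (p i a) (U i a) (p i a + x) by exists x.
rewrite mulrAC ler_pdivlMr // mulrC /dotv !mulr_sumr; apply: ler_sum => j _.
have q_ge0 := (shift_U_simplex _ _ _ Sq).1 j.
apply: le_trans (_ : theta * ((p i a + x) j 0 * `|z j 0|) <= _).
  by rewrite ler_pM2l // ler_wpM2l // real_ler_norm ?num_real.
by rewrite !mulrA ler_wpM2r // (U_dominated _ _ _ _ Sq).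
Qed.

Lemma dotv_proxy_le_dominated i z s :
  shift_set (p i (pi i)) (Uhat i (pi i)) s ->
  dotv s z <= alpha / theta * (\sum_j P i j * `|z j 0|) + beta * xnorm xi z.
Proof.
move=> [y Uhat_y <-]; have [M M_ge0 UM] := compact_entry_bounded (Uhat_compact i (pi i)).
apply: le_trans (dotv_proxy_le xi_gt0 xi_sum1 (U_neq0 _ _) (U_sub_Uhat _ _) M_ge0 UM
  Uhat_y (fun x Ux => dotv_nominal_le _ _ _ z Ux)) _.
by rewrite lerD2l ler_wpM2r ?xnorm_ge0 ?le_beta_max.
Qed.

Lemma abs_proxy_bellmanB_le x y i :
  `|(That x - That y) i 0|
    <= alpha * (\sum_j P i j * `|(x - y) j 0|) + theta * beta * xnorm xi (x - y).
Proof.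
rewrite !mxE opprD addrACA subrr add0r -mulrBr normrM gtr0_norm //.
have -> : alpha * (\sum_j P i j * `|(x - y) j 0|) + theta * beta * xnorm xi (x - y)
    = theta * (alpha / theta * (\sum_j P i j * `|(x - y) j 0|) + beta * xnorm xi (x - y)).
  by field; rewrite gt_eqF.
rewrite ler_pM2l //; apply: abs_supp_funB_le => // s Ss.
  exact: dotv_proxy_le_dominated.
have -> : \sum_j P i j * `|(x - y) j 0| = \sum_j P i j * `|(y - x) j 0|.
  by apply: eq_bigr => j _; rewrite !mxE distrC.
by rewrite xnorm_distC; exact: dotv_proxy_le_dominated.
Qed.

Lemma abs_proxy_bellman_gap_le x i : `|(That x - T x) i 0| <= theta * beta * xnorm xi x.
Proof.
rewrite !mxE opprD addrACA subrr add0r -mulrBr normrM gtr0_norm // -mulrA ler_pM2l //.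
have Uhat_ub := shift_Uhat_ubound i (pi i) x.
rewrite ger0_norm ?subr_ge0; last exact: supp_fun_subset.
rewrite lerBlDl; apply: supp_fun_le => [|_ [y Uhat_y <-]]; first exact: shift_Uhat_neq0.
have [M M_ge0 UM] := compact_entry_bounded (Uhat_compact i (pi i)).
have U_le_supp x' : U i (pi i) x' ->
    dotv (p i (pi i) + x') x <= supp_fun (shift_set (p i (pi i)) (U i (pi i))) x.
  by move=> Ux'; apply: supp_fun_ge; [exact: shift_U_ubound | exists x'].
apply: le_trans (dotv_proxy_le xi_gt0 xi_sum1 (U_neq0 _ _) (U_sub_Uhat _ _) M_ge0 UM
  Uhat_y U_le_supp) _.
by rewrite lerD2l ler_wpM2r ?xnorm_ge0 ?le_beta_max.
Qed.

Lemma xnorm_proxy_bellmanB_le x y :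
  xnorm xi (That x - That y)
    <= Num.sqrt (2 * (alpha ^+ 2 + theta ^+ 2 * beta ^+ 2)) * xnorm xi (x - y).
Proof.
apply: xnorm_le => //; first by rewrite mulr_ge0 ?sqrtr_ge0 ?xnorm_ge0.
apply: le_trans (xnorm2_le_shifted_majorant xi_ge0 xi_sum1 (abs_proxy_bellmanB_le x y)) _.
have jensen := stationary_jensen xi_ge0 (x - y) P_stochastic xi_stationary.
under eq_bigr do rewrite exprMn mulrCA.
rewrite -mulr_sumr !exprMn sqr_xnorm // sqr_sqrtr; last first.
  exact: mulr_ge0 (ler0n _ 2) (addr_ge0 (sqr_ge0 _) (mulr_ge0 (sqr_ge0 _) (sqr_ge0 _))).
have := ler_wpM2l (sqr_ge0 alpha) jensen; nra.
Qed.

Lemma xnorm_proxy_bellmanB_le_exact x y :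
  beta = 0 -> xnorm xi (That x - That y) <= alpha * xnorm xi (x - y).
Proof.
move=> beta0; apply: xnorm_le => //; first by rewrite mulr_ge0 ?xnorm_ge0.
have entry i : `|(That x - That y) i 0| <= alpha * \sum_j P i j * `|(x - y) j 0|.
  by have := abs_proxy_bellmanB_le x y i; rewrite beta0 mulr0 mul0r addr0.
apply: le_trans (xnorm2_le_majorant xi_ge0 entry) _.
under eq_bigr do rewrite exprMn mulrCA.
by rewrite -mulr_sumr exprMn sqr_xnorm // ler_wpM2l ?sqr_ge0 ?stationary_jensen.
Qed.

Lemma xnorm_proxy_bellman_gap_le x : xnorm xi (That x - T x) <= theta * beta * xnorm xi x.
Proof.
apply: (xnorm_le_entrywise xi_ge0 xi_sum1 _ (abs_proxy_bellman_gap_le x)).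
by rewrite !mulr_ge0 ?beta_max_ge0 ?xnorm_ge0 // ltW.
Qed.

Variables (d : nat) (Phi : 'M[R]_(n, d)) (Pi : 'cV[R]_n -> 'cV[R]_n).
Hypothesis Pi_proj : forall z, is_xi_proj Phi xi z (Pi z).
Variables (vt v : 'cV[R]_n).
Hypotheses (vt_fixed : Pi (That vt) = vt) (v_fixed : T v = v).

Let xnorm_error_le : xnorm xi (vt - v)
    <= xnorm xi (That vt - That v) + xnorm xi (That v - T v) + xnorm xi (Pi v - v).
Proof.
have -> : vt - v = (Pi (That vt) - Pi (That v)) + (Pi (That v) - Pi (T v)) + (Pi v - v).
  by rewrite vt_fixed v_fixed !addrA !subrK.
apply: le_trans (ler_xnormD xi_ge0 _ _) _; rewrite lerD2r.
apply: le_trans (ler_xnormD xi_ge0 _ _) _.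
by apply: lerD; apply: xi_proj_nonexpansive.
Qed.

Lemma projected_robust_error_le :
  alpha ^+ 2 + theta ^+ 2 * beta ^+ 2 < 1 / 2 ->
  xnorm xi (vt - v) <= (theta * beta * xnorm xi v + xnorm xi (Pi v - v))
                       / (1 - Num.sqrt (2 * (alpha ^+ 2 + theta ^+ 2 * beta ^+ 2))).
Proof.
move=> small; apply: ler_div_of_contraction (sqrtr_double_lt1 small) _.
apply: le_trans xnorm_error_le _; rewrite addrA lerD2r.
by apply: lerD; [exact: xnorm_proxy_bellmanB_le | exact: xnorm_proxy_bellman_gap_le].
Qed.

Lemma projected_robust_error_le_exact :
  alpha < 1 -> (forall i, beta_ia xi (U i (pi i)) (Uhat i (pi i)) = 0) ->
  xnorm xi (vt - v) <= xnorm xi (Pi v - v) / (1 - alpha).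
Proof.
move=> alpha_lt1 /beta_max_eq0 beta0; apply: ler_div_of_contraction alpha_lt1 _.
apply: le_trans xnorm_error_le _; rewrite lerD2r -[X in _ <= X]addr0.
apply: lerD; first exact: xnorm_proxy_bellmanB_le_exact.
by have := xnorm_proxy_bellman_gap_le v; rewrite beta0 mulr0 mul0r.
Qed.

End RobustBellman.

Theorem corollary2 (R : realType) (n d : nat) (A : finType)
  (c : 'I_n -> A -> R) (theta : R) (pi : 'I_n -> A)
  (p : 'I_n -> A -> 'cV[R]_n) (U Uhat : 'I_n -> A -> set 'cV[R]_n)
  (Pexp : 'M[R]_n) (xi : 'cV[R]_n) (Phi : 'M[R]_(n, d))
  (Pi : 'cV[R]_n -> 'cV[R]_n) (alpha : R) (vt v : 'cV[R]_n) :
  0 < theta < 1 ->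
  (forall i a, simplex (p i a)) ->
  (forall i a, (U i a !=set0)%classic /\ compact (U i a)) ->
  (forall i a, shift_set (p i a) (U i a) `<=` simplex) ->
  (forall i a, U i a `<=` Uhat i a /\ compact (Uhat i a)) ->
  stochastic Pexp ->
  stationary Pexp xi ->
  (forall i, 0 < xi i 0) ->
  (forall x, is_xi_proj Phi xi x (Pi x)) ->
  0 < alpha < 1 ->
  (forall i j a q, shift_set (p i a) (U i a) q -> theta * q j 0 <= alpha * Pexp i j) ->
  alpha ^+ 2 + theta ^+ 2 * (beta_max xi pi U Uhat) ^+ 2 < 1 / 2 ->
  Pi (bellman c theta pi p Uhat vt) = vt ->
  bellman c theta pi p U v = v ->
  xnorm xi (vt - v) <=
    (theta * beta_max xi pi U Uhat * xnorm xi v + xnorm xi (Pi v - v)) /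
    (1 - Num.sqrt (2 * (alpha ^+ 2 + theta ^+ 2 * (beta_max xi pi U Uhat) ^+ 2)))
  /\
  ((forall i, beta_ia xi (U i (pi i)) (Uhat i (pi i)) = 0) ->
   xnorm xi (vt - v) <= xnorm xi (Pi v - v) / (1 - alpha)).
Proof.
move=> /andP[theta_gt0 _] _ U_cpt shift_U_simplex Uhat_cpt P_stochastic xi_stationary
  xi_gt0 Pi_proj /andP[alpha_gt0 alpha_lt1] U_dominated small vt_fixed v_fixed.
have U_neq0 i a := (U_cpt i a).1.
have U_sub_Uhat i a := (Uhat_cpt i a).1.
have Uhat_compact i a := (Uhat_cpt i a).2.
split; first exact: (projected_robust_error_le _ _ _ c _ _ _ _ _ _ Pexp).
by apply: (projected_robust_error_le_exact _ _ _ c theta _ _ _ _ _ Pexp) => //; exact: ltW.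
Qed.
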